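(* Let $X=X_F\uplus X_H$ be a set of $n\ge1$ clocks, $M\in\mathbb{N}$, and let $v_1,v_2$ be valuations with $v_1\sim_M v_2$. Let $L=\{x\in X\mid -M\le v_1(x)\}$. Then there is a valuation $v_2'$ such that $v_2'\!\downarrow_L=v_2\!\downarrow_L$ and $v_1\approx_M v_2'$.
   Context: $X_F$ are future clocks, $X_H$ history clocks. $\overline{\mathbb{R}}=\mathbb{R}\cup\{\pm\infty\}$ with $(+\infty)+\alpha=+\infty$, $(-\infty)+\beta=-\infty$ for $\beta\ne+\infty$, $-(\pm\infty)=\mp\infty$. A valuation $v:X\cup\{0\}\to\overline{\mathbb{R}}$ has $v(0)=0$, $v(x)\in\mathbb{R}_{\ge0}\cup\{+\infty\}$ for $x\in X_H$, $v(x)\in\mathbb{R}_{\le0}\cup\{-\infty\}$ for $x\in X_F$; $v\!\downarrow_L$ is the restriction of $v$ to $L$; $v\models x-y\triangleleft c$ iff $v(x)-v(y)\triangleleft c$. For $\alpha\in\mathbb{R}$, $\{\alpha\}=\alpha-\lfloor\alpha\rfloor$. $\sim$: for $K\in\mathbb{N}$, $\alpha\sim_K\beta$ iff $\alpha\triangleleft c\iff\beta\triangleleft c$ for all ${\triangleleft}\in\{<,\le\}$ and $c\in\{\pm\infty\}$ or $c\in\mathbb{Z}$ with $|c|\le K$; $v_1\sim_M v_2$ iff $v_1(x)\sim_{nM}v_2(x)$ for all $x\in X$ and $v_1(x)-v_1(y)\sim_{(n+1)M}v_2(x)-v_2(y)$ for all $x,y\in X$, with $n=|X|$. $\approx$: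 $v_1\approx_M v_2$ iff for all clocks $x,y$: (1) $v_1(x)\triangleleft c\iff v_2(x)\triangleleft c$ for ${\triangleleft}\in\{<,\le\}$ and $c\in\{\pm\infty\}$ or $c\in\mathbb{Z}$ with $c\le M$; (2) $v_1\models x-y\triangleleft c\iff v_2\models x-y\triangleleft c$ for ${\triangleleft}\in\{<,\le\}$ and $c\in\{\pm\infty\}$ or $c\in\mathbb{Z}$ with $|c|\le M$; (3) if $-\infty<v_1(x),v_1(y)\le M$ then $\{v_1(x)\}\le\{v_1(y)\}\iff\{v_2(x)\}\le\{v_2(y)\}$. *)

From HB Require Import structures.
From mathcomp Require Import all_boot all_order all_algebra.
From mathcomp Require Import all_classical all_reals.
From mathcomp Require Import constructive_ereal.
Set Implicit Arguments. Unset Strict Implicit. Unset Printing Implicit Defensive.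
Import Order.TTheory GRing.Theory Num.Theory.
Local Open Scope ring_scope.
Local Open Scope ereal_scope.

Section Defs.
Variable R : realType.

Definition xadd (a b : \bar R) : \bar R :=
  match a, b with
  | +oo, _ => +oo
  | _, +oo => +oo
  | -oo, _ => -oo
  | _, -oo => -oo
  | r%:E, s%:E => (r + s)%:E
  end.

Definition xsub (a b : \bar R) : \bar R := xadd a (- b).

Definition frac (a : R) : R := (a - (Num.floor a)%:~R)%R.

(* Clocks: a finite type X; isF x means x is a future clock (x in X_F),
   otherwise x is a history clock (x in X_H).  The special clock 0 is not
   in X; v(0) = 0 is implicit. *)
Definition valuation (X : finType) (isF : pred X) (v : X -> \bar R) : Prop :=
  forall x, if isF x then v x <= 0 else 0 <= v x.

Definition thr_abs (K : nat) (c : \bar R) : Prop :=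
  c = +oo \/ c = -oo \/ exists z : int, c = (z%:~R)%:E /\ (`|z| <= K%:Z)%R.

Definition thr_up (M : nat) (c : \bar R) : Prop :=
  c = +oo \/ c = -oo \/ exists z : int, c = (z%:~R)%:E /\ (z <= M%:Z)%R.

Definition simK (K : nat) (a b : \bar R) : Prop :=
  forall c, thr_abs K c -> (a < c) = (b < c) /\ (a <= c) = (b <= c).

Definition simM (X : finType) (M : nat) (v1 v2 : X -> \bar R) : Prop :=
  (forall x, simK (#|X| * M) (v1 x) (v2 x)) /\
  (forall x y, simK (#|X|.+1 * M) (xsub (v1 x) (v1 y)) (xsub (v2 x) (v2 y))).

Definition approxM (X : finType) (M : nat) (v1 v2 : X -> \bar R) : Prop :=
  forall x y : X,
    (forall c, thr_up M c ->
       (v1 x < c) = (v2 x < c) /\ (v1 x <= c) = (v2 x <= c)) /\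
    (forall c, thr_abs M c ->
       (xsub (v1 x) (v1 y) < c) = (xsub (v2 x) (v2 y) < c) /\
       (xsub (v1 x) (v1 y) <= c) = (xsub (v2 x) (v2 y) <= c)) /\
    (-oo < v1 x -> v1 x <= (M%:R)%:E -> -oo < v1 y -> v1 y <= (M%:R)%:E ->
       (frac (fine (v1 x)) <= frac (fine (v1 y)))%R =
       (frac (fine (v2 x)) <= frac (fine (v2 y)))%R).

End Defs.

From Pilot Require Import Defs.
From mathcomp Require Import all_boot all_order all_algebra.
From mathcomp Require Import all_classical all_reals.
From mathcomp Require Import constructive_ereal.
From mathcomp Require Import lra.
Import Order.TTheory GRing.Theory Num.Theory.
Set Implicit Arguments. Unset Strict Implicit. Unset Printing Implicit Defensive.

(* Keep v2 on L.  A clock x outside L has v1 x < -M, so the constraints of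
   ~~_M on x only see the integer part of v1 x and, through condition (3), the
   position of the fractional part of v1 x among those of the other clocks
   below M.  Such an x gets the value floor (v1 x) + t_x, the fractional parts
   t_x being inserted one clock at a time into the finite order of the
   fractional parts of v2 on L (with t_x = 0 exactly when v1 x is an integer).
   On L the clocks below M already agree: ~_M compares differences with
   constants up to (n+1)M >= 2M, which determines the order of fractional
   parts.  A clock below -M and a clock above M differ by more than 2M under
   both valuations, so condition (2) holds for such pairs. *)

Section OrderSimilar.
Local Open Scope ring_scope.
Variables (R : realFieldType) (X : finType) (a : X -> R).
Hypothesis a_ge0 : forall x, 0 <= a x.

Definition order_similar (b : X -> R) (D : pred X) : Prop :=
  [/\ forall x, D x -> 0 <= b x < 1,
      forall x, D x -> (a x == 0) = (b x == 0) &
      forall x y, D x -> D y -> (a x <= a y) = (b x <= b y)].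

Lemma order_similar_sub b (D D' : pred X) :
  (forall x, D' x -> D x) -> order_similar b D -> order_similar b D'.
Proof.
by move=> DD' [b01 b0 ble]; split=> [x /DD'|x /DD'|x y /DD' Dx /DD']; auto.
Qed.

Section NewPoint.
Variables (b : X -> R) (D : pred X) (z : X).
Hypothesis bD : order_similar b D.

Definition fits (t : R) : Prop :=
  [/\ 0 <= t < 1, (a z == 0) = (t == 0) &
      forall y, D y -> (a y <= a z) = (b y <= t) /\ (a z <= a y) = (t <= b y)].

Lemma fits_value_of_twin y : D y -> a y = a z -> fits (b y).
Proof.
case: bD => b01 b0 ble Dy ayz; split; first exact: b01.
  by rewrite -ayz b0.
by move=> y' Dy'; rewrite -ayz !ble.
Qed.

Lemma fits0 : a z = 0 -> (forall y, D y -> a y != 0) -> fits 0.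
Proof.
case: bD => b01 b0 _ az0 aD0; split; rewrite ?az0 ?lexx ?ltr01 ?eqxx //.
move=> y Dy; have /andP[by0 _] := b01 y Dy.
have ay_gt0 : 0 < a y by rewrite lt_def aD0 ?a_ge0.
have by_gt0 : 0 < b y by rewrite lt_def -b0 ?aD0.
by rewrite (ltW ay_gt0) (ltW by_gt0) !leNgt ay_gt0 by_gt0.
Qed.

Lemma fits_midpoint : 0 < a z -> (forall y, D y -> a y != a z) ->
  exists t, fits t.
Proof.
case: bD => b01 b0 ble az_gt0 aDz.
pose lo := \big[Order.max/0]_(y | D y && (a y < a z)) b y.
pose hi := \big[Order.min/1]_(y | D y && (a z < a y)) b y.
have b_lt y y' : D y && (a y < a z) -> D y' && (a z < a y') -> b y < b y'.
  move=> /andP[Dy ayz] /andP[Dy' azy']; rewrite ltNge -ble //.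
  by rewrite -ltNge (lt_trans ayz azy').
have hi_gt0 : 0 < hi.
  apply: lt_bigmin => [|y /andP[Dy azy]]; first exact: ltr01.
  have /andP[by0 _] := b01 y Dy.
  by rewrite lt_def by0 andbT -b0 // gt_eqF // (lt_trans az_gt0 azy).
have lo_lt_hi : lo < hi.
  apply: bigmax_lt => // y lo_y; apply: lt_bigmin => [|y' hi_y']; last exact: b_lt.
  by case/andP: lo_y => Dy _; case/andP: (b01 y Dy).
have lo_ge0 : 0 <= lo by exact: bigmax_ge_id.
have hi_le1 : hi <= 1 by exact: bigmin_le_id.
exists ((lo + hi) / 2); split.
- by apply/andP; split; lra.
- by rewrite gt_eqF //; apply/esym/negbTE; apply/eqP; lra.
move=> y Dy; have := aDz y Dy; rewrite neq_lt => /orP[ayz|azy].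
- have : b y <= lo by apply: le_bigmax_cond; rewrite Dy ayz.
  rewrite (ltW ayz) (leNgt (a z)) ayz => by_lo.
  by split; apply/esym; [apply/idP|apply/negbTE/negP]; lra.
- have : hi <= b y by apply: bigmin_le_cond; rewrite Dy azy.
  rewrite (ltW azy) (leNgt (a y)) azy => hi_by.
  by split; apply/esym; [apply/negbTE/negP|apply/idP]; lra.
Qed.

Lemma exists_fits : exists t, fits t.
Proof.
have [/existsP[y /andP[Dy /eqP ayz]]|no_twin] :=
  boolP [exists y, D y && (a y == a z)].
  by exists (b y); exact: fits_value_of_twin.
have aDz y : D y -> a y != a z.
  by move=> Dy; apply: contra no_twin => ayz; apply/existsP; exists y; rewrite Dy.
have [az0|az_gt0] := eqVneq (a z) 0.
  by exists 0; apply: fits0 => // y Dy; rewrite -az0 aDz.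
by apply: fits_midpoint => //; rewrite lt_def az_gt0 a_ge0.
Qed.

End NewPoint.

Lemma order_similar_add (b : X -> R) (D : pred X) (z : X) : order_similar b D ->
  exists b', (forall x, D x -> b' x = b x) /\
             order_similar b' [pred x | (x == z) || D x].
Proof.
move=> bD; have [b01 b0 ble] := bD.
have [t [t01 t0 tD]] := exists_fits z bD.
have bz_t : D z -> b z = t.
  move=> Dz; have [] := tD z Dz; rewrite lexx => /esym bz_le /esym t_le.
  by apply/eqP; rewrite eq_le bz_le t_le.
exists (fun x => if x == z then t else b x); split.
  by move=> x Dx; case: eqP => [xz|//]; subst x; rewrite bz_t.
split=> [x|x|x y] /=.
- by case: eqP => [_|_ /= /b01].
- by case: eqP => [->|_ /= /b0].
case: (eqVneq x z) => [->|xz]; case: (eqVneq y z) => [->|yz] //= Dx Dy.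
- by rewrite !lexx.
- by rewrite (tD y Dy).2.
- by rewrite (tD x Dx).1.
- exact: ble.
Qed.

Lemma order_similar_extend (b : X -> R) (D : pred X) : order_similar b D ->
  exists b', (forall x, D x -> b' x = b x) /\ order_similar b' predT.
Proof.
move=> bD.
suff [b' [b'D b'sim]] : exists b', (forall x, D x -> b' x = b x) /\
    order_similar b' [pred x | (x \in enum X) || D x].
  by exists b'; split=> //; apply: order_similar_sub b'sim => x _; rewrite /= mem_enum.
elim: (enum X) => [|z s [b1 [b1D b1sim]]].
  by exists b; split=> //; apply: order_similar_sub bD.
have [b2 [b2D b2sim]] := order_similar_add z b1sim.
exists b2; split=> [x Dx|]; first by rewrite b2D ?b1D //= Dx orbT.
by apply: order_similar_sub b2sim => x /=; rewrite in_cons -orbA.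
Qed.
End OrderSimilar.

Definition same_cmp d (T : porderType d) (a b c : T) : Prop :=
  ((a < c) = (b < c) /\ (a <= c) = (b <= c))%O.

Section SameCmp.
Variables (d : Order.disp_t) (T : porderType d).
Local Open Scope order_scope.

Lemma same_cmp_lt (a b c : T) : a < c -> b < c -> same_cmp a b c.
Proof. by move=> ac bc; rewrite /same_cmp ac bc (ltW ac) (ltW bc). Qed.

Lemma same_cmp_gt (a b c : T) : c < a -> c < b -> same_cmp a b c.
Proof.
by move=> ca cb; rewrite /same_cmp (lt_gtF ca) (lt_gtF cb) (lt_geF ca) (lt_geF cb).
Qed.

End SameCmp.

Section FloorFrac.
Local Open Scope ring_scope.
Variable R : realType.
Local Notation frac := (@Defs.frac R).
Implicit Types (a b e : R) (k c : int).

Lemma frac_ge0 a : 0 <= frac a.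
Proof. by rewrite /frac subr_ge0 floor_le. Qed.

Lemma frac_lt1 a : frac a < 1.
Proof. have := floorD1_gt a; rewrite intrD1 /frac; lra. Qed.

Lemma floorDfrac a : a = (Num.floor a)%:~R + frac a.
Proof. by rewrite /frac addrC subrK. Qed.

Lemma floor_intrD k e : 0 <= e < 1 -> Num.floor (k%:~R + e) = k.
Proof.
by move=> /andP[e0 e1]; apply/eqP; rewrite floor_eq intrD1; apply/andP; split; lra.
Qed.

Lemma frac_intrD k e : 0 <= e < 1 -> frac (k%:~R + e) = e.
Proof. by move=> e01; rewrite /frac floor_intrD // addrC addKr. Qed.

Lemma frac_eq0 a : (frac a == 0) = (a <= (Num.floor a)%:~R).
Proof. by rewrite /frac subr_eq0 eq_le floor_le andbT. Qed.

Lemma frac_le a b :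
  (frac a <= frac b) = (a - b <= (Num.floor a - Num.floor b)%:~R).
Proof. by rewrite /frac intrB; apply/idP/idP; lra. Qed.

Lemma ler_intD k c e : -1 < e < 1 ->
  (k%:~R + e <= c%:~R) = (k < c) || (k == c) && (e <= 0).
Proof.
move=> /andP[e_gt e_lt]; case: (ltgtP k c) => [kc|ck|->] /=; last by rewrite gerDl.
- have : (k + 1)%:~R <= c%:~R :> R by rewrite ler_int lezD1.
  by rewrite intrD1 => kc'; lra.
- have : (c + 1)%:~R <= k%:~R :> R by rewrite ler_int lezD1.
  by rewrite intrD1 => ck'; apply/negbTE; rewrite -ltNge; lra.
Qed.

Lemma ltr_intD k c e : -1 < e < 1 ->
  (k%:~R + e < c%:~R) = (k < c) || (k == c) && (e < 0).
Proof.
move=> /andP[e_gt e_lt]; case: (ltgtP k c) => [kc|ck|->] /=; last by rewrite gtrDl.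
- have : (k + 1)%:~R <= c%:~R :> R by rewrite ler_int lezD1.
  by rewrite intrD1 => kc'; lra.
- have : (c + 1)%:~R <= k%:~R :> R by rewrite ler_int lezD1.
  by rewrite intrD1 => ck'; apply/negbTE; rewrite -leNgt; lra.
Qed.

Lemma same_cmp_floor a a' : Num.floor a = Num.floor a' ->
  (frac a == 0) = (frac a' == 0) -> forall c, same_cmp a a' c%:~R.
Proof.
have frac_range x : -1 < frac x < 1.
  by rewrite frac_lt1 andbT (lt_le_trans _ (frac_ge0 x)) ?ltrN10.
have frac_le0 x : (frac x <= 0) = (frac x == 0) by rewrite eq_le frac_ge0 andbT.
have frac_lt0 x : (frac x < 0) = false by rewrite ltNge frac_ge0.
move=> aa' fa' c; rewrite /same_cmp (floorDfrac a) (floorDfrac a').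
by rewrite !ltr_intD ?ler_intD ?frac_range // !frac_le0 !frac_lt0 aa' fa'.
Qed.

Lemma same_cmp_sub_floor a b a' b' :
  Num.floor a = Num.floor a' -> Num.floor b = Num.floor b' ->
  (frac a <= frac b) = (frac a' <= frac b') ->
  (frac b <= frac a) = (frac b' <= frac a') ->
  forall c, same_cmp (a - b) (a' - b') c%:~R.
Proof.
have decomp x y : x - y = (Num.floor x - Num.floor y)%:~R + (frac x - frac y).
  by rewrite intrB {1}(floorDfrac x) {1}(floorDfrac y); lra.
have range x y : -1 < frac x - frac y < 1.
  have := frac_ge0 x; have := frac_lt1 x; have := frac_ge0 y; have := frac_lt1 y.
  by move=> *; apply/andP; split; lra.
move=> aa' bb' ab ba c; rewrite /same_cmp (decomp a b) (decomp a' b').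
by rewrite !ltr_intD ?ler_intD ?range // !subr_le0 !subr_lt0 !ltNge aa' bb' ab ba.
Qed.

Lemma norm_floor_le (M : nat) a : - M%:R <= a <= M%:R -> `|Num.floor a| <= M%:Z.
Proof.
move=> /andP[Ma aM]; rewrite ler_norml floor_ge_int intrN Ma /=.
by rewrite -(ler_int R); apply: le_trans (floor_le a) aM.
Qed.

Lemma intr_window (M : nat) (z : int) :
  `|z| <= M%:Z -> - (M%:R : R) <= (z%:~R : R) <= M%:R.
Proof.
rewrite ler_norml => /andP[Mz zM]; rewrite -(ler_int R) intrN in Mz.
by rewrite -(ler_int R) in zM; apply/andP.
Qed.

Lemma floor_window (M : nat) a a' : - M%:R <= a <= M%:R ->
  (forall c : int, `|c| <= M%:Z -> same_cmp a a' c%:~R) ->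
  Num.floor a = Num.floor a' /\ (frac a == 0) = (frac a' == 0).
Proof.
move=> aM cmp; have fa := norm_floor_le aM.
have a'M : - M%:R <= a' <= M%:R.
  have [lt1 _] := cmp (- M%:Z) ltac:(by rewrite normrN).
  have [_ le2] := cmp M%:Z (lexx _).
  move: aM lt1 le2; rewrite intrN -pmulrn !leNgt => /andP[aM1 aM2] lt1 le2.
  by rewrite -lt1 -le2 aM1 aM2.
have fa' := norm_floor_le a'M.
have floor_le_other (x y : R) :
    (x < (Num.floor y)%:~R) = (y < (Num.floor y)%:~R) -> Num.floor y <= Num.floor x.
  by move=> xy; rewrite floor_ge_int leNgt xy -leNgt floor_le.
have floor_eq : Num.floor a = Num.floor a'.
  apply/eqP; rewrite eq_le !floor_le_other //; first exact: (cmp _ fa').1.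
  exact/esym/(cmp _ fa).1.
by rewrite !frac_eq0 -floor_eq (cmp _ fa).2.
Qed.

End FloorFrac.

Section ExtendedReals.
Variable R : realType.
Local Open Scope ring_scope.
Local Open Scope ereal_scope.
Implicit Types a b c : \bar R.

Definition ekind a : option bool :=
  match a with _%:E => None | +oo => Some true | -oo => Some false end.

Lemma fin_num_ekind a : (a \is a fin_num) = (ekind a == None).
Proof. by case: a. Qed.

Lemma same_cmp_infty a b c : ekind a = ekind b -> c = +oo \/ c = -oo ->
  same_cmp a b c.
Proof.
case: a b => [r||] [s||] //= _ [->|->]; split=> //.
all: by rewrite ?ltry ?leey // ?leeNy_eq ?ltNge ?leNye.
Qed.

Lemma simK_ekind K a b : simK K a b -> ekind a = ekind b.
Proof.
move=> sim; have [lt_oo _] := sim +oo (or_introl erefl).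
have [_ le_Noo] := sim -oo (or_intror (or_introl erefl)).
by move: lt_oo le_Noo; clear sim; case: a b => [r||] [s||]; rewrite ?ltry ?ltxx ?leeNy_eq.
Qed.

Lemma simK_le K K' a b : (K' <= K)%N -> simK K a b -> simK K' a b.
Proof.
move=> KK' sim c [->|[->|[z [-> zK]]]]; apply: sim; [by left|by right; left|].
by right; right; exists z; split=> //; apply: le_trans zK _; rewrite lez_nat.
Qed.

Lemma xsub_EFin (r s : R) : xsub r%:E s%:E = (r - s)%:E.
Proof. by []. Qed.

Lemma xsub_ekind a b a' b' : ekind a = ekind a' -> ekind b = ekind b' ->
  (a \isn't a fin_num) || (b \isn't a fin_num) -> xsub a b = xsub a' b'.
Proof. by case: a a' b b' => [?||] [?||] [?||] [?||]. Qed.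

Lemma same_cmp_EFin (P : int -> Prop) (r s : R) :
  (forall z, P z -> same_cmp r s z%:~R) ->
  forall c, c = +oo \/ c = -oo \/ (exists z, c = (z%:~R)%:E /\ P z) ->
  same_cmp r%:E s%:E c.
Proof.
move=> cmp c [c_oo|[c_oo|[z [-> Pz]]]].
- by apply: same_cmp_infty => //; left.
- by apply: same_cmp_infty => //; right.
- by rewrite /same_cmp !lte_fin !lee_fin; apply: cmp.
Qed.

End ExtendedReals.

Section Restore.
Local Open Scope ring_scope.
Local Open Scope ereal_scope.
Variables (R : realType) (X : finType) (isF : pred X) (M : nat).
Variables (v1 v2 : X -> \bar R).
Hypothesis sim1 : forall x, simK M (v1 x) (v2 x).
Hypothesis sim2 : forall x y, simK (M + M) (xsub (v1 x) (v1 y)) (xsub (v2 x) (v2 y)).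

Local Notation m := (M%:R : R).
Local Notation frac := (@Defs.frac R).
Local Notation p x := (fine (v1 x)).
Local Notation q x := (fine (v2 x)).

Definition L : pred X := fun x => - m%:E <= v1 x.
Definition bounded : pred X := fun x => (v1 x \is a fin_num) && (v1 x <= m%:E).

Lemma ekind_v2 x : ekind (v2 x) = ekind (v1 x).
Proof. exact/esym/simK_ekind/sim1. Qed.

Lemma same_cmp_v2 x (z : int) : (`|z| <= M%:Z)%R ->
  same_cmp (v1 x) (v2 x) (z%:~R)%:E.
Proof. by move=> zM; apply: sim1; right; right; exists z. Qed.

Lemma window_EFin x : L x -> bounded x ->
  [/\ v1 x = (p x)%:E, v2 x = (q x)%:E & (- m <= p x <= m)%R].
Proof.
move=> Lx /andP[fin1 le1].
have fin2 : v2 x \is a fin_num by rewrite fin_num_ekind ekind_v2 -fin_num_ekind.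
move: Lx le1; rewrite /L -(fineK fin1) !lee_fin => -> ->.
by rewrite (fineK fin2).
Qed.

Lemma window_floor x : L x -> bounded x ->
  Num.floor (p x) = Num.floor (q x) /\ (frac (p x) == 0%R) = (frac (q x) == 0%R).
Proof.
move=> Lx Bx; have [E1 E2 pM] := window_EFin Lx Bx.
apply: (floor_window pM) => z zM.
by have := same_cmp_v2 x zM; rewrite E1 E2 /same_cmp !lte_fin !lee_fin.
Qed.

Lemma window_frac_le x y : L x -> bounded x -> L y -> bounded y ->
  (frac (p x) <= frac (p y))%R = (frac (q x) <= frac (q y))%R.
Proof.
move=> Lx Bx Ly By; have [E1x E2x pxM] := window_EFin Lx Bx.
have [E1y E2y pyM] := window_EFin Ly By.
rewrite !frac_le -(window_floor Lx Bx).1 -(window_floor Ly By).1.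
set z := (Num.floor (p x) - Num.floor (p y))%R.
have zM : (`|z| <= (M + M)%:Z)%R.
  by rewrite (le_trans (ler_normB _ _)) // PoszD lerD // norm_floor_le.
have [_] := sim2 x y (or_intror (or_intror (ex_intro _ z (conj erefl zM)))).
by rewrite E1x E2x E1y E2y !xsub_EFin lee_fin lee_fin.
Qed.

Lemma order_similar_window :
  order_similar (fun x => frac (p x)) (fun x => frac (q x)) [pred x | L x && bounded x].
Proof.
split=> [x _|x /andP[Lx Bx]|x y /andP[Lx Bx] /andP[Ly By]].
- by rewrite frac_ge0 frac_lt1.
- exact: (window_floor Lx Bx).2.
- exact: window_frac_le.
Qed.

Lemma v2_ge_window x : L x -> - m%:E <= v2 x.
Proof.
have [lt_M _] := @same_cmp_v2 x (- M%:Z) ltac:(by rewrite normrN).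
by move: lt_M; rewrite intrN -pmulrn EFinN /L !leNgt => ->.
Qed.

Lemma v2_gt_window x : m%:E < v1 x -> m%:E < v2 x.
Proof. by have [_ le_M] := @same_cmp_v2 x M%:Z (lexx _); rewrite !ltNge le_M. Qed.

Section Witness.
Variable b : X -> R.
Hypothesis b_window : forall x, L x && bounded x -> b x = frac (q x).
Hypothesis b_similar : order_similar (fun x => frac (p x)) b predT.

Definition v2'_real x : R := ((Num.floor (p x))%:~R + b x)%R.

Definition v2' x : \bar R :=
  if L x then v2 x else if v1 x \is a fin_num then (v2'_real x)%:E else v1 x.

Lemma b_range x : (0 <= b x < 1)%R.
Proof. by case: b_similar => + _ _; apply. Qed.

Lemma floor_v2'_real x : Num.floor (v2'_real x) = Num.floor (p x).
Proof. exact/floor_intrD/b_range. Qed.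

Lemma frac_v2'_real x : frac (v2'_real x) = b x.
Proof. exact/frac_intrD/b_range. Qed.

Lemma v2'_real_window x : L x -> bounded x -> v2'_real x = q x.
Proof.
move=> Lx Bx; rewrite /v2'_real b_window ?Lx // (window_floor Lx Bx).1.
by rewrite -floorDfrac.
Qed.

Lemma v2'_L x : L x -> v2' x = v2 x.
Proof. by rewrite /v2' => ->. Qed.

Lemma v1_bounded x : bounded x -> v1 x = (p x)%:E.
Proof. by case/andP=> /fineK. Qed.

Lemma v2'_bounded x : bounded x -> v2' x = (v2'_real x)%:E.
Proof.
move=> Bx; rewrite /v2'; case: ifP => Lx; last by case/andP: Bx => ->.
by have [_ -> _] := window_EFin Lx Bx; rewrite v2'_real_window.
Qed.

Lemma ekind_v2' x : ekind (v2' x) = ekind (v1 x).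
Proof.
rewrite /v2'; case: ifP => _; first exact: ekind_v2.
by case: ifP => //; rewrite fin_num_ekind => /eqP ->.
Qed.

Lemma bounded_notL x : ~~ L x -> v1 x \is a fin_num -> bounded x.
Proof.
rewrite /L -ltNge => ltM fin1; rewrite /bounded fin1 ltW // (lt_le_trans ltM) //.
by rewrite lee_fin (le_trans _ (ler0n _ M)) // oppr_le0.
Qed.

Lemma same_cmp_v2'_real x (c : int) : same_cmp (p x) (v2'_real x) c%:~R.
Proof.
apply: same_cmp_floor; first by rewrite floor_v2'_real.
by rewrite frac_v2'_real; case: b_similar => _ + _; apply.
Qed.

Lemma notL_lt x : ~~ L x -> v1 x < - m%:E.
Proof. by rewrite /L -ltNge. Qed.

Lemma v2'_real_notL x : ~~ L x -> v1 x \is a fin_num ->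
  (p x < - m)%R /\ (v2'_real x < - m)%R.
Proof.
move=> nLx fin1; have := notL_lt nLx.
rewrite (v1_bounded (bounded_notL nLx fin1)) -EFinN lte_fin => px_lt; split=> //.
by have [+ _] := same_cmp_v2'_real x (- M%:Z)%R; rewrite intrN -pmulrn px_lt => /esym.
Qed.

Lemma valuation_v2' : valuation isF v1 -> valuation isF v2 -> valuation isF v2'.
Proof.
move=> val1 val2 x; rewrite /v2'; case: (boolP (L x)) => Lx; first exact: val2.
have m_ge0 : (0 <= m)%R := ler0n _ M.
have v1_neg : v1 x < 0 by rewrite (lt_le_trans (notL_lt Lx)) // lee_fin oppr_le0.
have := val1 x; case: (isF x) => [v1_le0|]; last by rewrite leNgt v1_neg.
case: ifPn => // fin1; have [_ v2x_lt] := v2'_real_notL Lx fin1; rewrite lee_fin; lra.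
Qed.

Lemma approx_bound x c : thr_up M c -> same_cmp (v1 x) (v2' x) c.
Proof.
move=> thr; rewrite /v2'; case: ifPn => Lx.
  case: thr => [c_oo|[c_oo|[z [-> zM]]]].
  - by apply: same_cmp_infty; [rewrite ekind_v2|left].
  - by apply: same_cmp_infty; [rewrite ekind_v2|right].
  have [zNM|Mz] := ltP z (- M%:Z)%R; last by apply: same_cmp_v2; rewrite ler_norml Mz.
  have zNM' : (z%:~R)%:E < - m%:E.
    by move: zNM; rewrite -(ltr_int R) intrN -pmulrn -EFinN lte_fin.
  by apply: same_cmp_gt; apply: lt_le_trans zNM' _; [|exact: v2_ge_window].
case: ifPn => fin1; last by split.
rewrite (v1_bounded (bounded_notL Lx fin1)).
exact: (@same_cmp_EFin R (fun z => z <= M%:Z)%R _ _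
  (fun z _ => same_cmp_v2'_real x z) _ thr).
Qed.

Lemma far_apart x y :
  ~~ L x -> v1 x \is a fin_num -> v1 y \is a fin_num -> ~~ bounded y ->
  [/\ v1 x = (p x)%:E, v2' x = (v2'_real x)%:E, v1 y = (p y)%:E,
      v2' y = (q y)%:E & (p x - p y < - m)%R /\ (v2'_real x - q y < - m)%R].
Proof.
move=> nLx fin_x fin_y nBy; have Bx := bounded_notL nLx fin_x.
have [px_lt v2x_lt] := v2'_real_notL nLx fin_x.
have m_ge0 : (0 <= m)%R := ler0n _ M.
have my : m%:E < v1 y by move: nBy; rewrite /bounded fin_y -ltNge.
have Ly : L y.
  by rewrite /L (le_trans _ (ltW my)) // -EFinN lee_fin; lra.
have fin2 : v2 y \is a fin_num by rewrite fin_num_ekind ekind_v2 -fin_num_ekind.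
have mq := v2_gt_window my.
split; [exact: v1_bounded | exact: v2'_bounded | by rewrite fineK |
       by rewrite v2'_L // fineK |].
by move: my mq; rewrite -(fineK fin_y) -(fineK fin2) !lte_fin /= => ? ?; split; lra.
Qed.

Lemma approx_diff x y c : thr_abs M c ->
  same_cmp (xsub (v1 x) (v1 y)) (xsub (v2' x) (v2' y)) c.
Proof.
move=> thr.
have [inf|] := boolP ((v1 x \isn't a fin_num) || (v1 y \isn't a fin_num)).
  by rewrite (xsub_ekind (esym (ekind_v2' x)) (esym (ekind_v2' y)) inf).
rewrite negb_or !negbK => /andP[fin_x fin_y].
have [/andP[Lx Ly]|nLL] := boolP (L x && L y).
  by rewrite !v2'_L //; apply: simK_le (sim2 x y) _ thr; rewrite leq_addr.
have [/andP[Bx By]|nBB] := boolP (bounded x && bounded y).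
  rewrite (v1_bounded Bx) (v1_bounded By) !v2'_bounded // !xsub_EFin.
  apply: (@same_cmp_EFin R (fun z => `|z| <= M%:Z)%R) thr => z _.
  by apply: same_cmp_sub_floor; rewrite ?floor_v2'_real ?frac_v2'_real //;
    case: b_similar => _ _; apply.
have int_thr (r s : R) : (forall z : int, - m <= z%:~R <= m -> same_cmp r s z%:~R)%R ->
    same_cmp r%:E s%:E c.
  move=> cmp; apply: (@same_cmp_EFin R (fun z => `|z| <= M%:Z)%R) thr => z.
  by move=> /(intr_window R); exact: cmp.
move: nLL; rewrite negb_and => nLL.
have [[nLx nBy]|[nLy nBx]] : (~~ L x /\ ~~ bounded y) \/ (~~ L y /\ ~~ bounded x).
  case/orP: nLL => [nLx|nLy]; [left|right]; split=> //.
  - by move: nBB; rewrite (bounded_notL nLx fin_x).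
  - by move: nBB; rewrite (bounded_notL nLy fin_y) andbT.
- have [-> -> -> -> [dp dw]] := far_apart nLx fin_x fin_y nBy.
  by rewrite !xsub_EFin; apply: int_thr => z /andP[? ?]; apply: same_cmp_lt; lra.
- have [-> -> -> -> [dp dw]] := far_apart nLy fin_y fin_x nBx.
  by rewrite !xsub_EFin; apply: int_thr => z /andP[? ?]; apply: same_cmp_gt; lra.
Qed.

Lemma approx_frac x y : -oo < v1 x -> v1 x <= m%:E -> -oo < v1 y -> v1 y <= m%:E ->
  (frac (fine (v1 x)) <= frac (fine (v1 y)))%R =
  (frac (fine (v2' x)) <= frac (fine (v2' y)))%R.
Proof.
have bounded_of z : -oo < v1 z -> v1 z <= m%:E -> bounded z.
  by move=> gtNy leM; rewrite /bounded leM andbT fin_numElt gtNy (le_lt_trans leM) ?ltry.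
move=> /bounded_of/[apply] Bx /bounded_of/[apply] By.
by rewrite !v2'_bounded //= !frac_v2'_real; case: b_similar => _ _; apply.
Qed.

Lemma approxM_v2' : approxM M v1 v2'.
Proof.
move=> x y; split; first exact: approx_bound.
by split; [exact: approx_diff | exact: approx_frac].
Qed.

End Witness.
End Restore.

Local Open Scope ring_scope.
Local Open Scope ereal_scope.

Theorem lemma10 (R : realType) (X : finType) (isF : pred X) (M : nat)
    (v1 v2 : X -> \bar R) :
  (0 < #|X|)%N ->
  valuation isF v1 -> valuation isF v2 ->
  simM M v1 v2 ->
  exists v2' : X -> \bar R,
    valuation isF v2' /\
    (forall x, - (M%:R)%:E <= v1 x -> v2' x = v2 x) /\
    approxM M v1 v2'.
Proof.
move=> X_gt0 val1 val2 [sim1 sim2].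
have sim1M x : simK M (v1 x) (v2 x).
  by apply: simK_le (sim1 x); rewrite leq_pmull.
have sim2M x y : simK (M + M) (xsub (v1 x) (v1 y)) (xsub (v2 x) (v2 y)).
  by apply: simK_le (sim2 x y); rewrite mulSn leq_add2l leq_pmull.
have [b [b_window b_similar]] :=
  order_similar_extend (fun x => frac_ge0 _) (order_similar_window sim1M sim2M).
exists (v2' M v1 v2 b); split; first exact: valuation_v2'.
by split; [exact: v2'_L | exact: approxM_v2'].
Qed.
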